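(* Assume there exists a decomposition of $V$ which is split with respect to the orderings $E_0,\ldots,E_d$ and $E^*_0,\ldots,E^*_d$. Then $A,A^*$ is a Leonard pair if and only if $(A;A^*;\{E_i\}_{i=0}^d;\{E^*_i\}_{i=0}^d)$ is a Leonard system.
   Context: Let $\mathbb K$ be a field, $d\ge 0$ an integer, and $\mathcal A$ a $\mathbb K$-algebra isomorphic to $\mathrm{Mat}_{d+1}(\mathbb K)$, with identity $I$. An element of $\mathcal A$ is multiplicity-free if it has $d+1$ mutually distinct eigenvalues, all in $\mathbb K$; for such $A$ with eigenvalues $\theta_0,\ldots,\theta_d$, the primitive idempotent associated with $\theta_i$ is $E_i=\prod_{j\ne i}(A-\theta_jI)/(\theta_i-\theta_j)$. Standing setup: $A,A^*$ are multiplicity-free elements of $\mathcal A$ ($A^*$ is just a name, not an adjoint); $E_0,\ldots,E_d$ is an ordering of the primitive idempotents of $A$ and $\theta_i$ is the eigenvalue of $A$ for $E_i$; $E^*_0,\ldots,E^*_d$ is an ordering of the primitive idempotents of $A^*$ and $\theta^*_i$ is the eigenvalue of $A^*$ for $E^*_i$; $V$ is an irreducible left $\mathcal A$-module. A decomposition of $V$ is a sequence $U_0,\ldots,U_d$ of 1-dimensional subspaces with $V=U_0+\cdots+U_d$ (direct sum); it is split (with respect to the orderings $E_0,\ldots,E_d$ and $E^*_0,\ldots,E^*_d$) if $(A-\theta_iI)U_i=U_{i+1}$ for $0\le i\le d-1$, $(A-\theta_dI)U_d=0$, $(A^*-\theta^*_iI)U_i=U_{i-1}$ for $1\le i\le d$,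 and $(A^*-\theta^*_0I)U_0=0$. A square matrix is tridiagonal if every nonzero entry lies on the diagonal, subdiagonal or superdiagonal, and irreducible tridiagonal if moreover all sub- and superdiagonal entries are nonzero. $A,A^*$ is a Leonard pair if there is a basis of $V$ in which $A$ is irreducible tridiagonal and $A^*$ diagonal, and a basis of $V$ in which $A^*$ is irreducible tridiagonal and $A$ diagonal. The sequence $(A;A^*;\{E_i\};\{E^*_i\})$ is a Leonard system if for all $0\le i,j\le d$: $E^*_iAE^*_j=0$ if $|i-j|>1$, $E^*_iAE^*_j\ne0$ if $|i-j|=1$, $E_iA^*E_j=0$ if $|i-j|>1$, and $E_iA^*E_j\ne0$ if $|i-j|=1$. *)

From HB Require Import structures.
From mathcomp Require Import all_boot all_order all_algebra.
Set Implicit Arguments. Unset Strict Implicit. Unset Printing Implicit Defensive.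
Import Order.TTheory GRing.Theory Num.Theory.
Local Open Scope ring_scope.

(* The algebra  \mathcal A  is modelled as  'M[K]_(d.+1)  and the irreducible
   left module V as the column space  'cV[K]_(d.+1)  with action  v |-> A *m v.
   A subspace of V is represented by a matrix whose COLUMN space is it;
   column spaces are compared through transposes with mathcomp's %MS. *)

Section LeonardDefs.
Variables (K : fieldType) (d : nat).
Local Notation M := 'M[K]_(d.+1).

Definition mult_free (A : M) : Prop :=
  exists th : 'I_d.+1 -> K, injective th /\ forall i, eigenvalue A (th i).

Definition eig_ordering (A : M) (th : 'I_d.+1 -> K) : Prop :=
  injective th /\ forall i, eigenvalue A (th i).

Definition prim_idem (A : M) (th : 'I_d.+1 -> K) (i : 'I_d.+1) : M :=
  \prod_(j < d.+1 | j != i) ((th i - th j)^-1 *: (A - (th j)%:M)).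

Definition colsp_eq m n (X : 'M[K]_(d.+1, m)) (Y : 'M[K]_(d.+1, n)) : bool :=
  (X^T == Y^T)%MS.

Definition decomposition (U : 'I_d.+1 -> M) : Prop :=
  (forall i, \rank (U i) = 1%N) /\
  (\sum_(i < d.+1) (U i)^T :=: 1%:M)%MS /\
  mxdirect (\sum_(i < d.+1) (U i)^T).

Definition split_decomposition (A As : M) (th ths : 'I_d.+1 -> K)
    (U : 'I_d.+1 -> M) : Prop :=
  decomposition U /\
  (forall i j : 'I_d.+1, j = i.+1 :> nat ->
     colsp_eq ((A - (th i)%:M) *m U i) (U j)) /\
  (A - (th ord_max)%:M) *m U ord_max = 0 /\
  (forall i j : 'I_d.+1, j = i.+1 :> nat ->
     colsp_eq ((As - (ths j)%:M) *m U j) (U i)) /\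
  (As - (ths ord0)%:M) *m U ord0 = 0.

Definition tridiagonal (B : M) : Prop :=
  forall i j : 'I_d.+1, (i.+1 < j)%N \/ (j.+1 < i)%N -> B i j = 0.

Definition irred_tridiagonal (B : M) : Prop :=
  tridiagonal B /\
  forall i j : 'I_d.+1, j = i.+1 :> nat \/ i = j.+1 :> nat -> B i j != 0.

Definition mx_in_basis (P B : M) : M := invmx P *m B *m P.

Definition leonard_pair (A As : M) : Prop :=
  (exists P : M, P \in unitmx /\
     irred_tridiagonal (mx_in_basis P A) /\ is_diag_mx (mx_in_basis P As)) /\
  (exists Q : M, Q \in unitmx /\
     irred_tridiagonal (mx_in_basis Q As) /\ is_diag_mx (mx_in_basis Q A)).

Definition leonard_system (A As : M) (E Es : 'I_d.+1 -> M) : Prop :=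
  forall i j : 'I_d.+1,
    ((i.+1 < j)%N \/ (j.+1 < i)%N -> Es i *m A *m Es j = 0) /\
    (j = i.+1 :> nat \/ i = j.+1 :> nat -> Es i *m A *m Es j != 0) /\
    ((i.+1 < j)%N \/ (j.+1 < i)%N -> E i *m As *m E j = 0) /\
    (j = i.+1 :> nat \/ i = j.+1 :> nat -> E i *m As *m E j != 0).

End LeonardDefs.

(* In a basis u_0, ..., u_d adapted to the split decomposition, A is lower
   bidiagonal with nonzero subdiagonal and A* is upper triangular with diagonal
   th*_0, ..., th*_d.  A primitive idempotent E*_j, being a polynomial in an
   upper triangular matrix, vanishes left of column j and below row j and has
   entry 1 at (j, j); hence E*_j A E*_i = 0 for j > i + 1 while
   E*_(i+1) A E*_i <> 0, and the j-th columns of the E*_j form a basis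
   diagonalizing A*.
   If some basis makes A* diagonal and A irreducible tridiagonal, then
   E*_i A E*_j and E*_j A E*_i vanish together, which yields the half of the
   Leonard system about the E*_i; conversely, in the basis diagonalizing A*,
   the entries of A are detected by the products E*_i A E*_j.  Reversing the
   split decomposition exchanges the roles of A and A*. *)

From HB Require Import structures.
From mathcomp Require Import all_boot all_order all_algebra.
From mathcomp Require Import zify.
Set Implicit Arguments. Unset Strict Implicit. Unset Printing Implicit Defensive.
Import Order.TTheory GRing.Theory Num.Theory.
Local Open Scope ring_scope.

Section Leonard.
Variables (K : fieldType) (d : nat).
Local Notation M := 'M[K]_(d.+1).
Implicit Types (A B L P R X Y : M) (th : 'I_d.+1 -> K).

Definition lagrange_poly th (j : 'I_d.+1) : {poly K} :=
  \prod_(k < d.+1 | k != j) ((th j - th k)^-1 *: ('X - (th k)%:P)).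

Lemma prim_idemE X th j : prim_idem X th j = horner_mx X (lagrange_poly th j).
Proof.
rewrite /prim_idem /lagrange_poly rmorph_prod; apply: eq_bigr => k _.
by rewrite -[RHS]/(horner_mx X _) horner_mxZ rmorphB /= horner_mx_X horner_mx_C.
Qed.

Lemma prim_idem_conj P X th j : P \in unitmx ->
  prim_idem (invmx P *m X *m P) th j = invmx P *m prim_idem X th j *m P.
Proof. by move=> Pu; rewrite !prim_idemE horner_mx_uconjC. Qed.

Lemma lagrange_poly_eval th j l :
  injective th -> (lagrange_poly th j).[th l] = (j == l)%:R.
Proof.
move=> th_inj; rewrite /lagrange_poly horner_prod.
have [<-|/negPf njl] := eqVneq j l.
  rewrite big1 // => k kj; rewrite hornerZ hornerXsubC mulVf //.
  by rewrite subr_eq0; apply: contra kj => /eqP/th_inj ->.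
by rewrite (bigD1 l) 1?eq_sym ?njl //= hornerZ hornerXsubC subrr mulr0 mul0r.
Qed.

Lemma horner_mx_eigenvector X (N : M) a p :
  X *m N = a *: N -> horner_mx X p *m N = p.[a] *: N.
Proof.
move=> XN; elim/poly_ind: p => [|p c IHp].
  by rewrite rmorph0 mul0mx horner0 scale0r.
rewrite rmorphD rmorphM /= horner_mx_X horner_mx_C mulmxDl -mulmxA XN.
rewrite -scalemxAr IHp scalerA mul_scalar_mx -scalerDl.
by rewrite hornerD hornerMX hornerC mulrC.
Qed.

Lemma prim_idem_rev X th j :
  prim_idem X (th \o @rev_ord d.+1) j = prim_idem X th (rev_ord j).
Proof.
rewrite !prim_idemE /lagrange_poly [in RHS](reindex_inj rev_ord_inj) /=.
by congr horner_mx; apply: eq_bigl => k; rewrite (inj_eq rev_ord_inj).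
Qed.

Lemma conjmx_eq0 P X : P \in unitmx -> (invmx P *m X *m P == 0) = (X == 0).
Proof.
move=> Pu; apply/eqP/eqP => [|->]; last by rewrite mulmx0 mul0mx.
by move/(congr1 (fun Y => P *m Y *m invmx P)); rewrite !mulmxA mulmxV // mul1mx
  mulmxK // mulmx0 mul0mx.
Qed.

Lemma conjmx_mul3 P X Y Z : P \in unitmx ->
  invmx P *m (X *m Y *m Z) *m P =
  (invmx P *m X *m P) *m (invmx P *m Y *m P) *m (invmx P *m Z *m P).
Proof. by move=> Pu; rewrite !mulmxA !mulmxK. Qed.

Lemma delta_mx_diag (a : 'I_d.+1) : delta_mx a a = diag_mx (delta_mx 0 a) :> M.
Proof.
apply/matrixP => x y; rewrite !mxE eqxx /=.
have [->|xa] := eqVneq x a; last by rewrite mul0rn.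
by rewrite eq_sym; case: (y == a).
Qed.

Lemma conjmx_mul P Q X : P \in unitmx -> Q \in unitmx ->
  invmx (P *m Q) *m X *m (P *m Q) = invmx Q *m (invmx P *m X *m P) *m Q.
Proof.
move=> Pu Qu; have PQu : P *m Q \in unitmx by rewrite unitmx_mul Pu.
have -> : invmx (P *m Q) = invmx Q *m invmx P.
  rewrite -[RHS](mulKmx PQu) -mulmxA (mulmxA Q) mulmxV // mul1mx mulmxV //.
  by rewrite mulmx1.
by rewrite !mulmxA.
Qed.

Lemma mul_delta_mx_sandwich (a b : 'I_d.+1) Y :
  delta_mx a a *m Y *m delta_mx b b = Y a b *: delta_mx a b.
Proof.
rewrite !delta_mx_diag mul_diag_mx mul_mx_diag; apply/matrixP => x y.
rewrite !mxE eqxx /=.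
by case: (eqVneq x a) => [->|_]; case: (eqVneq y b) => [->|_];
  rewrite ?mul1r ?mulr1 ?mul0r ?mulr0.
Qed.

Lemma delta_mx_neq0 (a b : 'I_d.+1) : delta_mx a b != 0 :> M.
Proof. by apply/eqP => /matrixP/(_ a b)/eqP; rewrite !mxE !eqxx oner_eq0. Qed.

Lemma idem_sandwich_eq0 (E : 'I_d.+1 -> M) Y P : P \in unitmx ->
  (forall j, invmx P *m E j *m P = delta_mx j j) ->
  forall k l, (E k *m Y *m E l == 0) = ((invmx P *m Y *m P) k l == 0).
Proof.
move=> Pu PE k l; rewrite -(conjmx_eq0 _ Pu) conjmx_mul3 // !PE.
by rewrite mul_delta_mx_sandwich scaler_eq0 (negPf (delta_mx_neq0 _ _)) orbF.
Qed.

Lemma irred_tridiagonal_eq0C B : irred_tridiagonal B ->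
  forall x y, (B x y == 0) = (B y x == 0).
Proof.
move=> [Btri Birr] x y.
have [far|[adj|/val_inj <-]] : ((x.+1 < y)%N \/ (y.+1 < x)%N) \/
    (y = x.+1 :> nat \/ x = y.+1 :> nat) \/ x = y :> nat by lia.
- by rewrite Btri // Btri ?eqxx //; lia.
- by rewrite (negPf (Birr _ _ adj)) (negPf (Birr y x _)) //; lia.
- by [].
Qed.

Lemma diag_mx_sandwich_eq0C B (a b : 'rV[K]_d.+1) :
  (forall x y, (B x y == 0) = (B y x == 0)) ->
  (diag_mx a *m B *m diag_mx b == 0) = (diag_mx b *m B *m diag_mx a == 0).
Proof.
move=> BC; suff sym a' b' : diag_mx a' *m B *m diag_mx b' = 0 ->
    diag_mx b' *m B *m diag_mx a' = 0 :> M.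
  by apply/eqP/eqP; apply: sym.
rewrite !mul_diag_mx !mul_mx_diag => /matrixP B0; apply/matrixP => x y.
move: (B0 y x); rewrite !mxE => /eqP; rewrite !mulf_eq0 BC => B0yx.
apply/eqP; rewrite !mulf_eq0; move: B0yx.
by case: (a' 0 y == 0); case: (B x y == 0); case: (b' 0 x == 0).
Qed.

(* In a basis of eigenvectors of X the E_a are diagonal, and a diagonal
   sandwich preserves the symmetric zero pattern of Y. *)
Lemma prim_idem_sandwich_eq0C X Y P th : P \in unitmx ->
  is_diag_mx (invmx P *m X *m P) -> irred_tridiagonal (invmx P *m Y *m P) ->
  forall a b, (prim_idem X th a *m Y *m prim_idem X th b == 0) =
              (prim_idem X th b *m Y *m prim_idem X th a == 0).
Proof.
move=> Pu /diag_mxP [D XD] /irred_tridiagonal_eq0C YC a b.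
have diagE c : invmx P *m prim_idem X th c *m P =
    diag_mx (map_mx (horner (lagrange_poly th c)) D).
  by rewrite -prim_idem_conj // XD prim_idemE horner_mx_diag.
rewrite -(conjmx_eq0 _ Pu) -[RHS](conjmx_eq0 _ Pu) !conjmx_mul3 // !diagE.
exact: diag_mx_sandwich_eq0C.
Qed.

Definition upper_triangular R := forall i j : 'I_d.+1, (j < i)%N -> R i j = 0.

Definition upper_hessenberg L := forall i j : 'I_d.+1, (j.+1 < i)%N -> L i j = 0.

Lemma upper_triangular_mul X Y : upper_triangular X -> upper_triangular Y ->
  upper_triangular (X *m Y) /\ forall i, (X *m Y) i i = X i i * Y i i.
Proof.
move=> Xut Yut; split=> [i j ji|i].
  rewrite mxE big1 // => n _.
  have [ni|iN] := ltnP n i; first by rewrite Xut ?mul0r.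
  by rewrite Yut ?mulr0 //; lia.
rewrite mxE (bigD1 i) //= big1 ?addr0 // => n /eqP/val_eqP /= ni.
have [lt|le] := ltnP n i; first by rewrite Xut ?mul0r.
by rewrite Yut ?mulr0 //; lia.
Qed.

Lemma upper_triangular_horner R p : upper_triangular R ->
  upper_triangular (horner_mx R p) /\ forall i, horner_mx R p i i = p.[R i i].
Proof.
move=> Rut; elim/poly_ind: p => [|p c [IHut IHdiag]].
  by rewrite rmorph0; split=> [i j _|i]; rewrite ?mxE ?horner0.
rewrite rmorphD rmorphM /= horner_mx_X horner_mx_C -mulmxE.
have [pRut pRdiag] := upper_triangular_mul IHut Rut.
split=> [i j ji|i]; rewrite mxE [in X in _ + X]mxE.
  by rewrite pRut // add0r -val_eqE /= gtn_eqF.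
by rewrite pRdiag IHdiag eqxx mulr1n hornerD hornerMX hornerC.
Qed.

Definition prod_XsubC_lt th m : {poly K} :=
  \prod_(k < d.+1 | (k < m)%N) ('X - (th k)%:P).
Definition prod_XsubC_gt th m : {poly K} :=
  \prod_(k < d.+1 | (m < k)%N) ('X - (th k)%:P).

Lemma lagrange_polyE th j : lagrange_poly th j =
  (\prod_(k < d.+1 | k != j) (th j - th k)^-1) *:
    (prod_XsubC_gt th j * prod_XsubC_lt th j).
Proof.
rewrite /lagrange_poly scaler_prod; congr (_ *: _).
rewrite (bigID (fun k : 'I_d.+1 => (j < k)%N)) /=.
by congr (_ * _); apply: eq_bigl => k; rewrite -val_eqE /=; apply/idP/idP; lia.
Qed.

Lemma mul_XsubC_lagrange_poly th j : ('X - (th j)%:P) * lagrange_poly th j =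
  (\prod_(k < d.+1 | k != j) (th j - th k)^-1) *: prod_XsubC_lt th d.+1.
Proof.
rewrite /lagrange_poly scaler_prod -scalerAr; congr (_ *: _).
rewrite /prod_XsubC_lt [RHS](bigD1 j) ?ltn_ord //=.
by congr (_ * _); apply: eq_bigl => k; rewrite ltn_ord.
Qed.

Section UpperTriangular.
Variables (R : M) (th : 'I_d.+1 -> K).
Hypotheses (R_ut : upper_triangular R) (R_diag : forall k, R k k = th k).

(* R - th k maps the span of e_0, ..., e_k into that of e_0, ..., e_(k-1). *)
Lemma horner_prod_XsubC_lt_col0 m x (l : 'I_d.+1) :
  (l < m)%N -> horner_mx R (prod_XsubC_lt th m) x l = 0.
Proof.
elim: m x l => [//|m IHm] x l lm; have lo := ltn_ord l.
have [md|dm] := ltnP m d.+1; last first.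
  rewrite /prod_XsubC_lt (eq_bigl (fun k : 'I_d.+1 => (k < m)%N)).
    by apply: IHm; lia.
  by move=> k /=; have := ltn_ord k; lia.
pose o := Ordinal md.
have -> : prod_XsubC_lt th m.+1 = prod_XsubC_lt th m * ('X - (th o)%:P).
  rewrite /prod_XsubC_lt (bigD1 o) /=; last by lia.
  rewrite mulrC; congr (_ * _); apply: eq_bigl => k.
  by rewrite -val_eqE /=; apply/idP/idP; lia.
rewrite rmorphM rmorphB /= horner_mx_X horner_mx_C -mulmxE mxE big1 // => n _.
rewrite !mxE; have [nm|mn] := ltnP n m; first by rewrite IHm // mul0r.
have [nl|/eqP/val_eqP /= nl] := eqVneq n l.
  have no : n = o by apply: val_inj; move: nl lm mn => /(congr1 val) /=; lia.
  by rewrite -nl no mulr1n R_diag subrr mulr0.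
by rewrite R_ut ?mulr0n ?subrr ?mulr0 //; lia.
Qed.

Lemma horner_prod_XsubC_gt_row0 m (l : 'I_d.+1) x :
  (m < l)%N -> horner_mx R (prod_XsubC_gt th m) l x = 0.
Proof.
move: {2}(d - m)%N (leqnn (d - m)) => t; elim: t m l x => [|t IHt] m l x dmt ml;
  have lo := ltn_ord l; first by lia.
have md : (m.+1 < d.+1)%N by lia.
pose o := Ordinal md.
have -> : prod_XsubC_gt th m = ('X - (th o)%:P) * prod_XsubC_gt th m.+1.
  rewrite /prod_XsubC_gt (bigD1 o) /=; last by lia.
  congr (_ * _); apply: eq_bigl => k.
  by rewrite -val_eqE /=; apply/idP/idP; lia.
rewrite rmorphM rmorphB /= horner_mx_X horner_mx_C -mulmxE mxE big1 // => n _.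
rewrite !mxE; have [mn|nm] := ltnP m.+1 n; first by rewrite IHt ?mulr0 //; lia.
have [ln|/eqP/val_eqP /= nl] := eqVneq l n.
  have lo_eq : l = o by apply: val_inj; move: ln ml nm => /(congr1 val) /=; lia.
  by rewrite -ln lo_eq mulr1n R_diag subrr mul0r.
by rewrite R_ut ?mulr0n ?subrr ?mul0r //; lia.
Qed.

Local Notation E := (prim_idem R th).

Lemma prim_idem_upper_col0 (j x m : 'I_d.+1) : (m < j)%N -> E j x m = 0.
Proof.
move=> mj; rewrite prim_idemE lagrange_polyE horner_mxZ rmorphM /= -mulmxE.
rewrite mxE mxE [X in _ * X]big1 ?mulr0 // => n _.
by rewrite horner_prod_XsubC_lt_col0 ?mulr0.
Qed.

Lemma prim_idem_upper_row0 (j n x : 'I_d.+1) : (j < n)%N -> E j n x = 0.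
Proof.
move=> jn; rewrite prim_idemE lagrange_polyE horner_mxZ rmorphM /= -mulmxE.
rewrite mxE mxE [X in _ * X]big1 ?mulr0 // => k _.
by rewrite horner_prod_XsubC_gt_row0 ?mul0r.
Qed.

Lemma prim_idem_upper_eigen j : R *m E j = th j *: E j.
Proof.
apply/eqP; rewrite -subr_eq0; apply/eqP.
have -> : R *m E j - th j *: E j =
    horner_mx R (('X - (th j)%:P) * lagrange_poly th j).
  rewrite rmorphM rmorphB /= horner_mx_X horner_mx_C -mulmxE prim_idemE.
  by rewrite mulmxBl mul_scalar_mx.
rewrite mul_XsubC_lagrange_poly horner_mxZ; apply/matrixP => x l.
by rewrite !mxE horner_prod_XsubC_lt_col0 ?mulr0.
Qed.

Lemma prim_idem_upper_hessenberg0 L (i j : 'I_d.+1) :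
  upper_hessenberg L -> (i.+1 < j)%N -> E j *m L *m E i = 0.
Proof.
move=> Lh ij; apply/matrixP => x y; rewrite !mxE big1 // => n _.
have [i_n|ni] := ltnP i n; first by rewrite prim_idem_upper_row0 ?mulr0.
rewrite mxE big1 ?mul0r // => m _.
have [mj|jm] := ltnP m j; first by rewrite prim_idem_upper_col0 ?mul0r.
by rewrite Lh ?mulr0 //; lia.
Qed.

Hypothesis th_inj : injective th.

Lemma prim_idem_upper_diag j : E j j j = 1.
Proof.
have [_ pRdiag] := upper_triangular_horner (lagrange_poly th j) R_ut.
by rewrite prim_idemE pRdiag R_diag lagrange_poly_eval // eqxx.
Qed.

Lemma prim_idem_upper_mul k l : E k *m E l = (k == l)%:R *: E l.
Proof.
by rewrite {1}prim_idemE (horner_mx_eigenvector _ (prim_idem_upper_eigen l))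
  lagrange_poly_eval.
Qed.

Lemma prim_idem_upper_hessenberg_sub L (i j : 'I_d.+1) :
  upper_hessenberg L -> j = i.+1 :> nat -> (E j *m L *m E i) j i = L j i.
Proof.
move=> Lh ji; rewrite mxE (bigD1 i) //= [X in _ + X]big1 ?addr0 => [|n ni].
  rewrite prim_idem_upper_diag mulr1 mxE (bigD1 j) //= prim_idem_upper_diag mul1r.
  rewrite [X in _ + X]big1 ?addr0 // => m mj.
  have {}mj : (m : nat) != j by [].
  have [lmj|jm] := ltnP m j; first by rewrite prim_idem_upper_col0 ?mul0r.
  by rewrite Lh ?mulr0 //; lia.
have [i_n|n_le_i] := ltnP i n; first by rewrite prim_idem_upper_row0 ?mulr0.
have {}ni : (n : nat) != i by [].
rewrite mxE big1 ?mul0r // => m _.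
have [mj|jm] := ltnP m j; first by rewrite prim_idem_upper_col0 ?mul0r.
by rewrite Lh ?mulr0 //; lia.
Qed.

Definition upper_eigenbasis : M := \matrix_(x, l) E l x l.

Lemma upper_eigenbasis_unit : upper_eigenbasis \in unitmx.
Proof.
rewrite unitmxE -det_tr det_trig; last first.
  by apply/is_trig_mxP => i j ij; rewrite !mxE prim_idem_upper_row0.
rewrite (eq_bigr (fun _ => 1)) ?prodr_const ?expr1n ?unitr1 // => i _.
by rewrite !mxE prim_idem_upper_diag.
Qed.

Lemma prim_idem_upper_eigenbasis j :
  E j *m upper_eigenbasis = upper_eigenbasis *m delta_mx j j.
Proof.
apply/matrixP => x l.
have -> : (E j *m upper_eigenbasis) x l = (E j *m E l) x l.
  by rewrite !mxE; apply: eq_bigr => n _; rewrite mxE.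
rewrite prim_idem_upper_mul mxE mxE (bigD1 j) //= [X in _ + X]big1 ?addr0 => [|n nj].
  rewrite [upper_eigenbasis x j]mxE [delta_mx _ _ _ _]mxE /=.
  by rewrite eqxx eq_sym; have [<-|_] := eqVneq j l; rewrite ?mul1r ?mulr1 ?mul0r ?mulr0.
by rewrite !mxE (negPf nj) mulr0.
Qed.

Lemma upper_eigenbasis_eigen :
  R *m upper_eigenbasis = upper_eigenbasis *m diag_mx (\row_l th l).
Proof.
apply/matrixP => x l; rewrite mul_mx_diag !mxE.
have -> : \sum_n R x n * upper_eigenbasis n l = (R *m E l) x l.
  by rewrite mxE; apply: eq_bigr => n _; rewrite mxE.
by rewrite prim_idem_upper_eigen mxE mulrC.
Qed.

Lemma prim_idem_upper_diagonalize : exists2 Q, Q \in unitmx &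
  (forall j, invmx Q *m E j *m Q = delta_mx j j) /\
  invmx Q *m R *m Q = diag_mx (\row_l th l).
Proof.
exists upper_eigenbasis; first exact: upper_eigenbasis_unit.
by split=> [j|]; rewrite -mulmxA (prim_idem_upper_eigenbasis, upper_eigenbasis_eigen)
  mulKmx ?upper_eigenbasis_unit.
Qed.

End UpperTriangular.

Lemma mx_entry_col (Y : M) k l : Y k l = (Y *m delta_mx l (0 : 'I_1)) k 0.
Proof. by rewrite -colE mxE. Qed.

Definition colsmx (u : 'I_d.+1 -> 'cV[K]_d.+1) : M := \matrix_(k, i) u i k 0.

Lemma colsmx_delta u l : colsmx u *m delta_mx l 0 = u l.
Proof.
apply/matrixP => a b; rewrite [b]ord1 !mxE (bigD1 l) //= !mxE !eqxx mulr1.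
by rewrite big1 ?addr0 // => j jl; rewrite !mxE (negPf jl) mulr0.
Qed.

Lemma colsmx_unit u :
  (1%:M <= \sum_(i < d.+1) <<(u i)^T>>)%MS -> colsmx u \in unitmx.
Proof.
move=> u_span; rewrite -unitmx_tr -row_full_unit -sub1mx.
apply: submx_trans u_span _; apply/sumsmx_subP => i _; rewrite genmxE.
have -> : (u i)^T = row i (colsmx u)^T by apply/matrixP => a b; rewrite !mxE ord1.
exact: row_sub.
Qed.

Lemma colsmx_coord u X l a b m k : colsmx u \in unitmx ->
  X *m u l = a *: u l + b *: u m ->
  (invmx (colsmx u) *m X *m colsmx u) k l = a *+ (k == l) + b *+ (k == m).
Proof.
move=> Su Xu; rewrite [LHS]mx_entry_col -[_ *m delta_mx _ _]mulmxA colsmx_delta.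
rewrite -mulmxA Xu mulmxDr -!scalemxAr -!colsmx_delta.
by rewrite !mulmxA mulVmx // !mul1mx !mxE !eqxx !andbT !mulr_natr.
Qed.

(* u_i spans U_i; the nonzero scalars c record (A - th_i) U_i = U_(i+1) and
   (As - ths_(i+1)) U_(i+1) = U_i. *)
Definition split_basis A As th ths (u : 'I_d.+1 -> 'cV[K]_d.+1) : Prop :=
  [/\ (1%:M <= \sum_(i < d.+1) <<(u i)^T>>)%MS,
      forall i j : 'I_d.+1, j = i.+1 :> nat ->
        exists2 c, c != 0 & A *m u i = th i *: u i + c *: u j,
      A *m u ord_max = th ord_max *: u ord_max,
      forall i j : 'I_d.+1, j = i.+1 :> nat ->
        exists2 c, c != 0 & As *m u j = ths j *: u j + c *: u i
    & As *m u ord0 = ths ord0 *: u ord0].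

Lemma split_basis_rev A As th ths u : split_basis A As th ths u ->
  split_basis As A (ths \o @rev_ord d.+1) (th \o @rev_ord d.+1) (u \o @rev_ord d.+1).
Proof.
have rev_succ (i j : 'I_d.+1) : j = i.+1 :> nat -> rev_ord i = (rev_ord j).+1 :> nat.
  by move=> ji /=; have := ltn_ord j; lia.
have rev0 : rev_ord ord0 = ord_max :> 'I_d.+1 by apply: val_inj => /=; lia.
have revmax : rev_ord ord_max = ord0 :> 'I_d.+1 by apply: val_inj => /=; lia.
move=> [u_span Au Aud Asu Asu0]; split=> /=.
- by move: u_span; rewrite (reindex_inj rev_ord_inj).
- by move=> i j /rev_succ; apply: Asu.
- by rewrite revmax.
- by move=> i j /rev_succ; apply: Au.
- by rewrite rev0.
Qed.

Section SplitBasis.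
Variables (A As : M) (th ths : 'I_d.+1 -> K) (u : 'I_d.+1 -> 'cV[K]_d.+1).
Hypothesis u_split : split_basis A As th ths u.

Local Notation S := (colsmx u).
Local Notation Es := (prim_idem As ths).

Lemma split_basis_unit : S \in unitmx.
Proof. by case: u_split => /colsmx_unit. Qed.

Lemma split_basis_dual_entry k l : exists c,
  (invmx S *m As *m S) k l = ths l *+ (k == l) + c *+ (k.+1 == l)%N.
Proof.
have [_ _ _ Asu Asu0] := u_split; have Su := split_basis_unit.
have [l0|lp] := posnP l.
  have -> : l = ord0 by apply: val_inj.
  exists 0; rewrite (colsmx_coord (a := ths ord0) (b := 0) (m := ord0) _ Su);
    by rewrite ?scale0r ?mul0rn ?addr0 ?Asu0.
have lt : (l.-1 < d.+1)%N by have := ltn_ord l; lia.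
have [c _ Asul] := Asu (Ordinal lt) l (esym (ltn_predK lp)).
exists c; rewrite (colsmx_coord _ Su Asul); congr (_ + _ *+ _).
by rewrite -val_eqE /=; apply/eqP/eqP; lia.
Qed.

Lemma split_basis_dual_upper : upper_triangular (invmx S *m As *m S).
Proof.
move=> k l lk; have [c ->] := split_basis_dual_entry k l.
have /negPf -> : k != l by rewrite -val_eqE /=; apply/eqP; lia.
have /negPf -> : (k.+1 != l)%N by apply/eqP; lia.
by rewrite !mulr0n addr0.
Qed.

Lemma split_basis_dual_diag k : (invmx S *m As *m S) k k = ths k.
Proof.
have [c ->] := split_basis_dual_entry k k.
have /negPf -> : (k.+1 != k)%N by apply/eqP; lia.
by rewrite eqxx mulr0n addr0.
Qed.

Lemma split_basis_hessenberg : upper_hessenberg (invmx S *m A *m S).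
Proof.
have [_ Au _ _ _] := u_split; move=> m n nm.
have lt : (n.+1 < d.+1)%N by have := ltn_ord m; lia.
have [c _ Aun] := Au n (Ordinal lt) erefl.
rewrite (colsmx_coord _ split_basis_unit Aun).
have /negPf -> : m != n by rewrite -val_eqE /=; apply/eqP; lia.
have /negPf -> : m != Ordinal lt by rewrite -val_eqE /=; apply/eqP; lia.
by rewrite !mulr0n addr0.
Qed.

Lemma split_basis_sub (i j : 'I_d.+1) :
  j = i.+1 :> nat -> (invmx S *m A *m S) j i != 0.
Proof.
have [_ Au _ _ _] := u_split; move=> ji; have [c c0 Aui] := Au i j ji.
rewrite (colsmx_coord _ split_basis_unit Aui) eqxx mulr1n.
have /negPf -> : j != i by rewrite -val_eqE /=; apply/eqP; lia.
by rewrite mulr0n add0r.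
Qed.

Lemma split_basis_dual_idem_far (i j : 'I_d.+1) :
  (i.+1 < j)%N -> Es j *m A *m Es i = 0.
Proof.
move=> ij; have Su := split_basis_unit; apply/eqP.
rewrite -(conjmx_eq0 _ Su) conjmx_mul3 // -!prim_idem_conj //.
by rewrite (prim_idem_upper_hessenberg0 split_basis_dual_upper split_basis_dual_diag
  split_basis_hessenberg ij).
Qed.

Hypothesis ths_inj : injective ths.

Lemma split_basis_dual_idem_sub (i j : 'I_d.+1) :
  j = i.+1 :> nat -> Es j *m A *m Es i != 0.
Proof.
move=> ji; have Su := split_basis_unit.
rewrite -(conjmx_eq0 _ Su) conjmx_mul3 // -!prim_idem_conj //.
apply/eqP => /matrixP /(_ j i).
rewrite (prim_idem_upper_hessenberg_sub split_basis_dual_upper split_basis_dual_diag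
  ths_inj split_basis_hessenberg ji) [X in _ = X]mxE.
by apply/eqP; exact: split_basis_sub.
Qed.

Lemma split_basis_dual_diagonalize : exists2 P, P \in unitmx &
  (forall j, invmx P *m Es j *m P = delta_mx j j) /\ is_diag_mx (invmx P *m As *m P).
Proof.
have Su := split_basis_unit.
have [Q Qu [QE QR]] := prim_idem_upper_diagonalize split_basis_dual_upper
  split_basis_dual_diag ths_inj.
exists (S *m Q); first by rewrite unitmx_mul Su.
split=> [j|]; rewrite conjmx_mul //; first by rewrite -prim_idem_conj.
by rewrite QR diag_mx_is_diag.
Qed.

End SplitBasis.

Definition colvec (U : M) : 'cV[K]_d.+1 := (nz_row U^T)^T.

Lemma colvecE (U : M) : \rank U = 1%N -> ((colvec U)^T :=: U^T)%MS.
Proof.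
move=> rU; rewrite trmxK; apply/eqmxP.
rewrite -(mxrank_leqif_eq (nz_row_sub U^T)).2 rank_rV nz_row_eq0.
by rewrite -mxrank_eq0 mxrank_tr rU.
Qed.

Lemma colsp_eq_colvec X (U1 U2 : M) : \rank U1 = 1%N -> \rank U2 = 1%N ->
  colsp_eq (X *m U1) U2 -> exists2 c, c != 0 & X *m colvec U1 = c *: colvec U2.
Proof.
move=> rU1 rU2 /eqmxP XU12; have U1E := colvecE rU1; have U2E := colvecE rU2.
have XuE : ((X *m colvec U1)^T :=: (colvec U2)^T)%MS.
  rewrite trmx_mul; apply: eqmx_trans (eqmxMr _ U1E) _.
  by rewrite -trmx_mul; apply: eqmx_trans XU12 _; apply: eqmx_sym.
have /sub_rVP [c Xuc] : ((X *m colvec U1)^T <= (colvec U2)^T)%MS by rewrite XuE.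
exists c; last by apply: trmx_inj; rewrite Xuc linearZ.
apply/eqP => c0; move: (eqmx_rank (introT eqmxP XuE)).
by rewrite Xuc c0 scale0r mxrank0 (eqmx_rank (introT eqmxP U2E)) mxrank_tr rU2.
Qed.

Lemma mulmx_colvec_eq0 X (U : M) : X *m U = 0 -> X *m colvec U = 0.
Proof.
move=> XU0; have /submxP [D DU] := nz_row_sub U^T.
by rewrite /colvec DU trmx_mul trmxK mulmxA XU0 mul0mx.
Qed.

Lemma split_decomposition_basis A As th ths U :
  split_decomposition A As th ths U -> split_basis A As th ths (colvec \o U).
Proof.
move=> [[rU [U_span _]] [AU [AUd [AsU AsU0]]]].
have shift X a v w : (X - a%:M) *m v = w -> X *m v = a *: v + w.
  by rewrite mulmxBl mul_scalar_mx => <-; rewrite addrC subrK.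
split=> /=.
- suff -> : (\sum_i <<(colvec (U i))^T>> :=: \sum_i (U i)^T)%MS by rewrite U_span.
  by apply: eqmx_sums => i _; apply: eqmx_trans (genmxE _) (colvecE (rU i)).
- move=> i j ji; have [c c0 Xu] := colsp_eq_colvec (rU i) (rU j) (AU i j ji).
  by exists c => //=; apply: shift.
- by rewrite (shift _ _ _ _ _ (mulmx_colvec_eq0 AUd)) addr0.
- move=> i j ji; have [c c0 Xu] := colsp_eq_colvec (rU j) (rU i) (AsU i j ji).
  by exists c => //=; apply: shift.
- by rewrite (shift _ _ _ _ _ (mulmx_colvec_eq0 AsU0)) addr0.
Qed.

Definition idem_irred_tridiagonal X (E : 'I_d.+1 -> M) : Prop :=
  forall i j : 'I_d.+1,
    ((i.+1 < j)%N \/ (j.+1 < i)%N -> E i *m X *m E j = 0) /\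
    (j = i.+1 :> nat \/ i = j.+1 :> nat -> E i *m X *m E j != 0).

Definition tridiagonal_eigenbasis X Y : Prop :=
  exists P : M, P \in unitmx /\
    irred_tridiagonal (mx_in_basis P X) /\ is_diag_mx (mx_in_basis P Y).

Lemma leonard_pairE A As :
  leonard_pair A As = (tridiagonal_eigenbasis A As /\ tridiagonal_eigenbasis As A).
Proof. by []. Qed.

Lemma leonard_systemE A As E Es : leonard_system A As E Es <->
  idem_irred_tridiagonal A Es /\ idem_irred_tridiagonal As E.
Proof.
split=> [LS|[LEs LE] i j]; last by have [? ?] := LEs i j; have [? ?] := LE i j.
by split=> i j; have [? [? [? ?]]] := LS i j.
Qed.

Lemma idem_irred_tridiagonal_rev X (E E' : 'I_d.+1 -> M) :
  (forall j, E' j = E (rev_ord j)) ->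
  idem_irred_tridiagonal X E' <-> idem_irred_tridiagonal X E.
Proof.
suff rev_imp (F F' : 'I_d.+1 -> M) : (forall j, F' j = F (rev_ord j)) ->
    idem_irred_tridiagonal X F -> idem_irred_tridiagonal X F'.
  by move=> EE'; split; apply: rev_imp => // j; rewrite EE' rev_ordK.
move=> FF' F_tri i j; have [far adj] := F_tri (rev_ord i) (rev_ord j); rewrite !FF'.
by split=> ij; [apply: far | apply: adj]; move: ij => /=;
  have := ltn_ord i; have := ltn_ord j; lia.
Qed.

Lemma split_basis_tridiagonal_eigenbasisP A As th ths u :
  split_basis A As th ths u -> injective ths ->
  tridiagonal_eigenbasis A As <-> idem_irred_tridiagonal A (prim_idem As ths).
Proof.
move=> u_split ths_inj; split=> [[P [Pu [PA PAs]]] i j|EsA].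
  have EsAC := prim_idem_sandwich_eq0C ths Pu PAs PA.
  split=> [[ij|ji]|[ji|ij]].
  - by apply/eqP; rewrite EsAC; apply/eqP; exact: (split_basis_dual_idem_far u_split ij).
  - exact: (split_basis_dual_idem_far u_split ji).
  - by rewrite EsAC; exact: (split_basis_dual_idem_sub u_split ths_inj ji).
  - exact: (split_basis_dual_idem_sub u_split ths_inj ij).
have [P Pu [PEs PAs]] := split_basis_dual_diagonalize u_split ths_inj.
have EsA0 := idem_sandwich_eq0 A Pu PEs.
exists P; split=> //; split=> //; split=> x y xy.
  by apply/eqP; rewrite -EsA0; apply/eqP; apply: (EsA x y).1.
by rewrite -EsA0; apply: (EsA x y).2.
Qed.

End Leonard.

Unset Implicit Arguments.
Set Strict Implicit.

Theorem lemma5p9 (K : fieldType) (d : nat) (A As : 'M[K]_(d.+1))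
    (th ths : 'I_d.+1 -> K) :
  mult_free A -> mult_free As ->
  eig_ordering A th -> eig_ordering As ths ->
  (exists U : 'I_d.+1 -> 'M[K]_(d.+1), split_decomposition A As th ths U) ->
  (leonard_pair A As <->
   leonard_system A As (prim_idem A th) (prim_idem As ths)).
Proof.
move=> _ _ [th_inj _] [ths_inj _] [U /split_decomposition_basis u_split].
have th_rev_inj := inj_comp th_inj (@rev_ord_inj d.+1).
rewrite leonard_pairE leonard_systemE.
rewrite (split_basis_tridiagonal_eigenbasisP u_split ths_inj).
rewrite (split_basis_tridiagonal_eigenbasisP (split_basis_rev u_split) th_rev_inj).
by rewrite (idem_irred_tridiagonal_rev As (prim_idem_rev A th)).
Qed.
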